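(* Let $\mathcal{L}$ be the collection of lower subsets of $\Omega$ and $\mathcal{B}_{\mathcal{L}}=\mathcal{B}\cap\mathcal{L}$ the collection of beneficial lower subsets of $\Omega$ (definitions below). Then $\mathcal{L}$ and $\mathcal{B}_{\mathcal{L}}$ are quadratic algebras of subsets of $\Omega$, and $\widehat{\mu}$ is a $q$-measure on $\mathcal{B}_{\mathcal{L}}$ that extends $\mu$; that is, $\mathcal{C}\subseteq\mathcal{B}_{\mathcal{L}}$ and $\widehat{\mu}(A)=\mu(A)$ for all $A\in\mathcal{C}$.
   Context: For $n\ge 1$, an $n$-path is a string $\omega=\alpha_0\alpha_1\cdots\alpha_n$ with $\alpha_k\in\{0,1\}$ and $\alpha_0=0$; $\Omega_n$ is the set of $n$-paths. For $n$-paths $\omega=\alpha_0\cdots\alpha_n$, $\omega'=\alpha'_0\cdots\alpha'_n$ put $D^n(\omega,\omega')=2^{-n}\prod_{k=1}^n i^{|\alpha_k-\alpha_{k-1}|}\prod_{k=1}^n i^{-|\alpha'_k-\alpha'_{k-1}|}\,\delta_{\alpha_n\alpha'_n}$ ($i=\sqrt{-1}$), and for $A\subseteq\Omega_n$ let $\mu_n(A)=\sum_{\omega,\omega'\in A}D^n(\omega,\omega')$ (a nonnegative real). $\Omega$ is the set of infinite sequences $\alpha_0\alpha_1\alpha_2\cdots$ with $\alpha_k\in\{0,1\}$, $\alpha_0=0$. A cylinder set is a set of the form $\{\alpha_0\alpha_1\cdots\in\Omega:\alpha_0\cdots\alpha_n\in B\}$ for some $n$ and some $B\subseteq\Omega_n$;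 $\mathcal{C}$ denotes the algebra of cylinder sets, and $\mu$ on $\mathcal{C}$ is defined by $\mu(\{\alpha_0\alpha_1\cdots:\alpha_0\cdots\alpha_n\in B\})=\mu_n(B)$ (this is well defined). For $A\subseteq\Omega$ and $n\ge 0$, $A^{(n)}=\{\omega\in\Omega:\text{there is }\omega'\in A\text{ whose first } n+1 \text{ entries agree with those of }\omega\}$; this is a cylinder set. $A$ is a lower set if $A=\bigcap_n A^{(n)}$; $A$ is beneficial if $\lim_{n\to\infty}\mu(A^{(n)})$ exists and is finite, and then $\widehat{\mu}(A)=\lim_{n\to\infty}\mu(A^{(n)})$. $\mathcal{B}$ is the set of beneficial sets. A collection $Q$ of subsets of a set $S$ is a quadratic algebra if $\emptyset,S\in Q$ and whenever $A,B,C\in Q$ are mutually disjoint with $A\cup B,A\cup C,B\cup C\in Q$, then $A\cup B\cup C\in Q$. A $q$-measure on a quadratic algebra $Q$ is a map $\nu:Q\to[0,\infty)$ such that for all mutually disjoint $A,B,C\in Q$ with $A\cup B,A\cup C,B\cup C\in Q$: $\nu(A\cup B\cup C)=\nu(A\cup B)+\nu(A\cup C)+\nu(B\cup C)-\nu(A)-\nu(B)-\nu(C)$. *)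

From HB Require Import structures.
From mathcomp Require Import all_boot all_order all_algebra.
From mathcomp Require Import all_classical all_reals all_analysis.
From mathcomp Require Import complex.
Set Implicit Arguments. Unset Strict Implicit. Unset Printing Implicit Defensive.
Import Order.TTheory GRing.Theory Num.Theory numFieldNormedType.Exports.
Local Open Scope classical_set_scope.
Local Open Scope ring_scope.

(* Omega : infinite 0/1 sequences alpha_0 alpha_1 ... with alpha_0 = 0
   (0 = false, 1 = true). *)
Definition Omega := {a : nat -> bool | a 0%N = false}.

(* Candidate n-paths: strings alpha_0 ... alpha_n (functions on 'I_(n+1)). *)
Definition npath (n : nat) := {ffun 'I_n.+1 -> bool}.

Definition Omega_n (n : nat) : {set npath n} := [set w : npath n | w ord0 == false].

(* the entry alpha_k of an n-path, for k <= n (arbitrary value false beyond) *)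
Definition entry (n : nat) (w : npath n) (k : nat) : bool :=
  if insub k is Some i then w i else false.

Definition Dn (R : realType) (n : nat) (w w' : npath n) : R[i] :=
  ((2%:R : R[i]) ^- n)
  * (\prod_(1 <= k < n.+1) ('i%C ^+ `|(entry w k : nat)%:Z - (entry w k.-1 : nat)%:Z|%N))
  * (\prod_(1 <= k < n.+1) ('i%C ^+ `|(entry w' k : nat)%:Z - (entry w' k.-1 : nat)%:Z|%N)^-1)
  * ((w ord_max == w' ord_max)%:R).

(* mu_n(A) = sum_{w, w' in A} D^n(w, w') (complex valued; the paper notes it
   is a nonnegative real) *)
Definition mu_n (R : realType) (n : nat) (B : {set npath n}) : R[i] :=
  \sum_(w in B) \sum_(w' in B) Dn R w w'.

Definition prefix (n : nat) (x : Omega) : npath n := [ffun i : 'I_n.+1 => proj1_sig x i].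

Definition cyl (n : nat) (B : {set npath n}) : set Omega :=
  [set x | prefix n x \in B].

Definition is_cyl (A : set Omega) : Prop :=
  exists n (B : {set npath n}), B \subset Omega_n n /\ A = cyl B.

(* mu on C, via a chosen representation (well defined by the paper);
   value 0 outside C (irrelevant).  mu is the real number mu_n(B). *)
Definition mu (R : realType) (A : set Omega) : R :=
  match pselect (exists nB : {n : nat & {set npath n}},
                   projT2 nB \subset Omega_n (projT1 nB) /\ A = cyl (projT2 nB)) with
  | left h => complex.Re (mu_n R (projT2 (proj1_sig (cid h))))
  | right _ => 0
  end.

Definition trunc (A : set Omega) (n : nat) : set Omega :=
  [set x | exists2 y, A y & forall k, (k <= n)%N -> proj1_sig x k = proj1_sig y k].

Definition lower (A : set Omega) : Prop := A = \bigcap_n trunc A n.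

Definition beneficial (R : realType) (A : set Omega) : Prop :=
  cvgn (fun n => mu R (trunc A n)).

Definition mu_hat (R : realType) (A : set Omega) : R :=
  limn (fun n => mu R (trunc A n)).

Definition quadratic_algebra (S : Type) (Q : set (set S)) : Prop :=
  Q set0 /\ Q setT /\
  forall A B C, Q A -> Q B -> Q C ->
    A `&` B = set0 -> A `&` C = set0 -> B `&` C = set0 ->
    Q (A `|` B) -> Q (A `|` C) -> Q (B `|` C) -> Q (A `|` B `|` C).

Definition q_measure (R : realType) (S : Type) (Q : set (set S)) (nu : set S -> R) : Prop :=
  (forall A, Q A -> 0 <= nu A) /\
  forall A B C, Q A -> Q B -> Q C ->
    A `&` B = set0 -> A `&` C = set0 -> B `&` C = set0 ->
    Q (A `|` B) -> Q (A `|` C) -> Q (B `|` C) ->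
    nu (A `|` B `|` C) = nu (A `|` B) + nu (A `|` C) + nu (B `|` C)
                         - nu A - nu B - nu C.

From Pilot Require Import Defs.
From HB Require Import structures.
From mathcomp Require Import all_boot all_order all_algebra.
From mathcomp Require Import all_classical all_reals all_analysis.
From mathcomp Require Import complex.
From mathcomp Require Import ring.
Import Order.TTheory GRing.Theory Num.Theory numFieldNormedType.Exports.
Local Open Scope classical_set_scope.
Local Open Scope ring_scope.
Set Implicit Arguments. Unset Strict Implicit. Unset Printing Implicit Defensive.

(** Factor [D^n(w, w') = 2^-n a(w) conj(a(w')) [w_n = w'_n]] with the phase
    [a(w) = i^(number of jumps of w)].  Summing [D^(n+1)] over the two one-step
    continuations of a pair of paths gives back [D^n], so [mu] does not depend
    on the level at which a cylinder is represented, and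
    [mu_n(B) = 2^-n sum_e |sum_(w in B, w_n = e) a(w)|^2 >= 0].  As a sum over
    pairs, [mu_n] satisfies the grade-2 additivity identity.  Disjoint lower
    sets have disjoint truncations from some level on (Koenig's lemma), so the
    identity holds for the truncations eventually and passes to the limit
    [mu_hat].  A cylinder is its own truncation from its level on. *)

Lemma absz_bool (a b : bool) : `|(a : nat)%:Z - (b : nat)%:Z|%N = (a != b) :> nat.
Proof. by case: a; case: b. Qed.

Lemma entry_ord n (w : npath n) (i : 'I_n.+1) : entry w i = w i.
Proof. by rewrite /entry valK. Qed.

Lemma entry_lt n (w : npath n) k (lt_kn : (k < n.+1)%N) : entry w k = w (Ordinal lt_kn).
Proof. by rewrite -(entry_ord w (Ordinal lt_kn)). Qed.

Lemma entry_last n (w : npath n) : entry w n = w ord_max.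
Proof. by rewrite (entry_lt _ (ltnSn n)); congr (w _); apply: val_inj. Qed.

Definition rcons_path n (w : npath n) (a : bool) : npath n.+1 :=
  [ffun i : 'I_n.+2 => if (i < n.+1)%N then entry w i else a].

Definition belast_path n (w : npath n.+1) : npath n :=
  [ffun j : 'I_n.+1 => w (widen_ord (leqnSn _) j)].

Lemma belast_rcons_path n (w : npath n) a : belast_path (rcons_path w a) = w.
Proof. by apply/ffunP => j; rewrite !ffunE /= ltn_ord entry_ord. Qed.

Lemma rcons_path_last n (w : npath n) a : rcons_path w a ord_max = a.
Proof. by rewrite ffunE /= ltnn. Qed.

Lemma rcons_belast_path n (w : npath n.+1) : rcons_path (belast_path w) (w ord_max) = w.
Proof.
apply/ffunP => i; rewrite ffunE; case: ifP => lt_in.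
  by rewrite (entry_lt _ lt_in) ffunE; congr (w _); apply: val_inj.
congr (w _); apply: val_inj => /=; apply/eqP.
by rewrite eqn_leq leqNgt lt_in -ltnS ltn_ord.
Qed.

Lemma entry_rcons_path_lt n (w : npath n) a k :
  (k < n.+1)%N -> entry (rcons_path w a) k = entry w k.
Proof. by move=> lt_kn; rewrite (entry_lt _ (ltnW lt_kn)) ffunE /= lt_kn. Qed.

Lemma entry_rcons_path_last n (w : npath n) a : entry (rcons_path w a) n.+1 = a.
Proof. by rewrite (entry_lt _ (ltnSn n.+1)) ffunE /= ltnn. Qed.

Definition lift_paths n (B : {set npath n}) : {set npath n.+1} :=
  [set w | belast_path w \in B].

Section Phase.
Variable R : realType.
Local Notation C := (R[i]).

Definition phase n (w : npath n) : C :=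
  \prod_(1 <= k < n.+1) 'i%C ^+ `|(entry w k : nat)%:Z - (entry w k.-1 : nat)%:Z|%N.

Lemma invCi : ('i%C : C)^-1 = - 'i%C.
Proof. by apply: mulr1_eq; rewrite mulrN -expr2 sqr_i opprK. Qed.

Lemma conjCi : ('i%C : C)^*%C = - 'i%C.
Proof. by apply/eqP; rewrite eq_complex /= ?oppr0 !eqxx. Qed.

Lemma Dn_phase n (w w' : npath n) :
  Dn R w w' = 2%:R ^- n * phase w * (phase w')^*%C * (w ord_max == w' ord_max)%:R.
Proof.
rewrite /Dn /phase rmorph_prod; congr (_ * _ * _); apply: eq_bigr => k _.
by rewrite rmorphXn -exprVn invCi; congr (_ ^+ _); exact/esym/conjCi.
Qed.

Lemma phase_rcons n (w : npath n) a :
  phase (rcons_path w a) = phase w * 'i%C ^+ (a != w ord_max).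
Proof.
rewrite /phase big_nat_recr //= entry_rcons_path_last entry_rcons_path_lt //.
rewrite entry_last absz_bool; congr (_ * _); apply: eq_big_nat => k /andP [_ lt_kn].
by rewrite !entry_rcons_path_lt // (leq_ltn_trans (leq_pred k)).
Qed.

(* The continuations of [w] and [w'] by the same bit contribute [1/2] each if
   [w] and [w'] end alike, and [i/2] and [-i/2], which cancel, otherwise. *)
Lemma sum_Dn_rcons n (w w' : npath n) :
  \sum_(a : bool) \sum_(a' : bool) Dn R (rcons_path w a) (rcons_path w' a') = Dn R w w'.
Proof.
rewrite !big_bool !Dn_phase !phase_rcons !rcons_path_last !rmorphM !rmorphXn /=.
rewrite (conjCi : Complex 0 (-1) = _).
rewrite exprSr invfM; have i_mul_i : ('i%C : C) * 'i%C = -1 by rewrite -expr2 sqr_i.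
have n2 : (2%:R : C) != 0 by rewrite pnatr_eq0.
by case: (w ord_max); case: (w' ord_max) => /=;
  rewrite ?expr0 ?expr1 ?eqxx /=; field: i_mul_i; rewrite expf_neq0.
Qed.

Lemma big_lift_paths n (B : {set npath n}) (F : npath n.+1 -> C) :
  \sum_(w in lift_paths B) F w = \sum_(w in B) \sum_(a : bool) F (rcons_path w a).
Proof.
rewrite (reindex (fun p : npath n * bool => rcons_path p.1 p.2)) /=; last first.
  exists (fun w => (belast_path w, w ord_max)) => [[w a] _|w _] /=.
    by rewrite belast_rcons_path rcons_path_last.
  exact: rcons_belast_path.
rewrite pair_big_dep /=; apply: eq_bigl => -[w a] /=.
by rewrite inE belast_rcons_path andbT.
Qed.

Lemma mu_n_lift n (B : {set npath n}) : mu_n R (lift_paths B) = mu_n R B.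
Proof.
rewrite /mu_n big_lift_paths; apply: eq_bigr => w _.
under eq_bigr => a _ do rewrite big_lift_paths.
by rewrite exchange_big /=; apply: eq_bigr => w' _; exact: sum_Dn_rcons.
Qed.

Lemma mu_n_ge0 n (B : {set npath n}) : 0 <= mu_n R B.
Proof.
pose f (e : bool) (w : npath n) := phase w * (w ord_max == e)%:R.
pose c := (2%:R : C) ^- n.
have Dn_sum : forall w w', Dn R w w' = \sum_(e : bool) c * (f e w * (f e w')^*%C).
  move=> w w'; rewrite Dn_phase big_bool /f !rmorphM /= !conjc_nat.
  by case: (w ord_max); case: (w' ord_max);
    rewrite /c /= ?mulr1 ?mulrA ?(mulr0, mul0r) ?addr0 ?add0r.
have -> : mu_n R B = \sum_(e : bool) c * ((\sum_(w in B) f e w) * (\sum_(w in B) f e w)^*%C).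
  rewrite /mu_n; under eq_bigr => w _ do under eq_bigr => w' _ do rewrite Dn_sum.
  under eq_bigr => w _ do rewrite exchange_big.
  rewrite exchange_big; apply: eq_bigr => e _.
  rewrite rmorph_sum mulr_suml mulr_sumr; apply: eq_bigr => w _.
  by rewrite mulr_sumr mulr_sumr.
apply: sumr_ge0 => e _; apply: mulr_ge0; last exact: mulcJ_ge0.
by rewrite /c invr_ge0 exprn_ge0 // ler0n.
Qed.

Lemma Re_mu_n_ge0 n (B : {set npath n}) : 0 <= complex.Re (mu_n R B).
Proof. by have := mu_n_ge0 B; rewrite lecE => /andP []. Qed.

End Phase.

Definition agree n (x y : Omega) := forall k, (k <= n)%N -> proj1_sig x k = proj1_sig y k.

Lemma prefix_in_Omega_n n (x : Omega) : Defs.prefix n x \in Omega_n n.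
Proof. by rewrite inE ffunE /=; case: x => f /= ->. Qed.

Lemma Omega_n_prefix n (w : npath n) : w \in Omega_n n -> exists x : Omega, Defs.prefix n x = w.
Proof.
rewrite inE => /eqP w0.
have entry0 : entry w 0 = false by rewrite (entry_lt _ (ltn0Sn n)) -w0; congr (w _); apply: val_inj.
exists (exist _ (entry w) entry0); apply/ffunP => i.
by rewrite ffunE /= entry_ord.
Qed.

Lemma prefix_eqP n (x y : Omega) :
  Defs.prefix n x = Defs.prefix n y <-> agree n x y.
Proof.
split=> [e k le_kn|e].
  by have := congr1 (fun w : npath n => w (Ordinal (le_kn : (k < n.+1)%N))) e; rewrite !ffunE.
by apply/ffunP => i; rewrite !ffunE; apply: e; rewrite -ltnS.
Qed.

Lemma belast_prefix n (x : Omega) : belast_path (Defs.prefix n.+1 x) = Defs.prefix n x.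
Proof. by apply/ffunP => j; rewrite !ffunE. Qed.

Lemma cyl_inj n (B1 B2 : {set npath n}) :
  B1 \subset Omega_n n -> B2 \subset Omega_n n -> cyl B1 = cyl B2 -> B1 = B2.
Proof.
move=> /fintype.subsetP sB1 /fintype.subsetP sB2 /seteqP[sub12 sub21]; apply/setP => w.
have [/Omega_n_prefix [x <-]|wNO] := boolP (w \in Omega_n n).
  by apply/idP/idP => [/(sub12 x)|/(sub21 x)].
by apply/idP/idP => [/sB1|/sB2]; rewrite (negbTE wNO).
Qed.

Lemma cyl_lift n (B : {set npath n}) : cyl (lift_paths B) = cyl B.
Proof. by apply/seteqP; split => x; rewrite /cyl /= inE belast_prefix. Qed.

Lemma lift_paths_sub n (B : {set npath n}) :
  B \subset Omega_n n -> lift_paths B \subset Omega_n n.+1.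
Proof.
move=> /fintype.subsetP sB; apply/fintype.subsetP => w; rewrite !inE => /sB.
by rewrite inE ffunE (_ : widen_ord _ ord0 = ord0) //; apply: val_inj.
Qed.

Lemma cyl_refine (R : realType) n m (B : {set npath n}) : B \subset Omega_n n -> (n <= m)%N ->
  exists B' : {set npath m},
    [/\ B' \subset Omega_n m, cyl B' = cyl B & mu_n R B' = mu_n R B].
Proof.
move=> sB /subnKC <-; elim: (m - n)%N => [|d [B' [sB' eB' mB']]].
  by rewrite addn0; exists B.
by rewrite addnS; exists (lift_paths B'); rewrite lift_paths_sub ?cyl_lift ?mu_n_lift.
Qed.

Lemma mu_cyl (R : realType) n (B : {set npath n}) :
  B \subset Omega_n n -> mu R (cyl B) = complex.Re (mu_n R B).
Proof.
move=> sB; rewrite /mu; case: pselect => [h|h]; last first.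
  by exfalso; apply: h; exists (existT _ n B).
case: (cid h) => -[m B'] /= [sB' e].
have [le_nm|/ltnW le_mn] := leqP n m.
  have [B'' [sB'' e'' <-]] := cyl_refine R sB le_nm.
  by rewrite (@cyl_inj _ B'' B') // e'' e.
have [B'' [sB'' e'' <-]] := cyl_refine R sB' le_mn.
by rewrite (@cyl_inj _ B'' B) // e'' e.
Qed.

Lemma mu_ge0 (R : realType) (A : set Omega) : 0 <= mu R A.
Proof. by rewrite /mu; case: pselect => // h; apply: Re_mu_n_ge0. Qed.

Lemma sub_trunc (A : set Omega) n : A `<=` trunc A n.
Proof. by move=> x Ax; exists x. Qed.

Lemma trunc_le (A : set Omega) m n : (m <= n)%N -> trunc A n `<=` trunc A m.
Proof. by move=> le_mn x [y Ay xy]; exists y => // k le_km; apply/xy/(leq_trans le_km). Qed.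

Lemma truncU (A B : set Omega) n : trunc (A `|` B) n = trunc A n `|` trunc B n.
Proof.
apply/seteqP; split=> x.
  by move=> [y [Ay|By] xy]; [left|right]; exists y.
by move=> [[y Ay xy]|[y By xy]]; exists y => //; [left|right].
Qed.

Lemma trunc_agree (A : set Omega) n (x y : Omega) : trunc A n x -> agree n x y -> trunc A n y.
Proof. by move=> [z Az xz] xy; exists z => // k le_kn; rewrite -xy // xz. Qed.

Lemma lowerP (A : set Omega) : lower A <-> (forall x, (forall n, trunc A n x) -> A x).
Proof.
split=> [eA x Ax|lowA]; first by rewrite eA => n _; exact: Ax.
by apply/seteqP; split=> [x Ax n _|x Ax]; [exact: sub_trunc | apply: lowA => n; exact: Ax].
Qed.

Lemma lowerU (A B : set Omega) : lower A -> lower B -> lower (A `|` B).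
Proof.
move=> /lowerP lowA /lowerP lowB; apply/lowerP => x AUBx.
have [Ax|/existsNP [n0 NAx]] := pselect (forall n, trunc A n x); first by left; apply: lowA.
right; apply: lowB => n; have := AUBx (maxn n n0); rewrite truncU => -[Ax|Bx].
  by exfalso; apply/NAx/(trunc_le (leq_maxr n n0)).
exact: (trunc_le (leq_maxl n n0)).
Qed.

Definition trunc_paths (A : set Omega) n : {set npath n} :=
  [set w in Omega_n n | `[< exists2 y, A y & Defs.prefix n y = w >]].

Lemma trunc_paths_sub A n : trunc_paths A n \subset Omega_n n.
Proof. by apply/fintype.subsetP => w; rewrite inE => /andP []. Qed.

Lemma trunc_cylE A n : trunc A n = cyl (trunc_paths A n).
Proof.
apply/seteqP; split=> x /=.
  move=> [y Ay xy]; rewrite /cyl /= inE prefix_in_Omega_n /=; apply/asboolP; exists y => //.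
  by apply/prefix_eqP => k le_kn; rewrite xy.
rewrite /cyl /= inE => /andP [_ /asboolP [y Ay /prefix_eqP yx]]; exists y => // k le_kn.
by rewrite yx.
Qed.

Lemma trunc_cyl n m (B : {set npath n}) : (n <= m)%N -> trunc (cyl B) m = cyl B.
Proof.
move=> le_nm; apply/seteqP; split; last exact: sub_trunc.
move=> x [y yB xy]; rewrite /cyl /= (_ : Defs.prefix n x = Defs.prefix n y) //.
by apply/prefix_eqP => k le_kn; apply/xy/(leq_trans le_kn).
Qed.

Lemma cyl_lower n (B : {set npath n}) : lower (cyl B).
Proof. by apply/lowerP => x Bx; have := Bx n; rewrite trunc_cyl. Qed.

Section Compactness.
Variable D : nat -> set Omega.
Hypothesis D_neq0 : forall n, D n !=set0.
Hypothesis D_decr : forall m n, (m <= n)%N -> D n `<=` D m.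
Hypothesis D_agree : forall n x y, D n x -> agree n x y -> D n y.

Definition extendable n (f : nat -> bool) :=
  forall m, exists2 z, D m z & forall k, (k <= n)%N -> proj1_sig z k = f k.

Definition set_bit (f : nat -> bool) j b k := if k == j then b else f k.

Lemma extendable_set_bit n f : extendable n f ->
  ~ extendable n.+1 (set_bit f n.+1 false) -> extendable n.+1 (set_bit f n.+1 true).
Proof.
move=> ext_f /existsNP [m0 no_ext] m; have [z Dz zf] := ext_f (maxn m m0).
have z_set_bit b : proj1_sig z n.+1 = b ->
    forall k, (k <= n.+1)%N -> proj1_sig z k = set_bit f n.+1 b k.
  move=> zb k; rewrite /set_bit leq_eqVlt ltnS; case: eqP => [-> //|_ /= le_kn].
  exact: zf.
case zb: (proj1_sig z n.+1).
  by exists z; [exact: D_decr (leq_maxl m m0) _ Dz | exact: z_set_bit].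
by exfalso; apply: no_ext; exists z; [exact: D_decr (leq_maxr m m0) _ Dz | exact: z_set_bit].
Qed.

(* The leftmost branch of the tree of extendable prefixes. *)
Fixpoint branch n : nat -> bool :=
  if n is n'.+1 then
    set_bit (branch n') n (~~ `[< extendable n (set_bit (branch n') n false) >])
  else fun _ => false.

Lemma extendable_branch n : extendable n (branch n).
Proof.
elim: n => [m|n IHn /=].
  have [z Dz] := D_neq0 m; exists z => // k; rewrite leqn0 => /eqP ->; exact: (proj2_sig z).
by case: asboolP => [//|]; exact: extendable_set_bit.
Qed.

Lemma branch_stable n k : (k <= n)%N -> branch n k = branch k k.
Proof.
elim: n => [|n IHn]; first by rewrite leqn0 => /eqP ->.
rewrite leq_eqVlt ltnS => /orP [/eqP -> //|le_kn].
by rewrite /= /set_bit (ltn_eqF (le_kn : (k < n.+1)%N)) IHn.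
Qed.

Lemma bigcap_nested_neq0 : exists x, forall n, D n x.
Proof.
exists (exist (fun a : nat -> bool => a 0%N = false) (fun k => branch k k) erefl) => n.
have [z Dz zb] := extendable_branch n n.
by apply: D_agree Dz _ => k le_kn; rewrite zb //= branch_stable.
Qed.

End Compactness.

Lemma lower_trunc_disjoint (A B : set Omega) : lower A -> lower B -> A `&` B = set0 ->
  \forall n \near \oo, trunc A n `&` trunc B n = set0.
Proof.
move=> /lowerP lowA /lowerP lowB AB0.
have [[N ABN0]|NAB0] := pselect (exists N, trunc A N `&` trunc B N = set0).
  near=> n; apply/seteqP; split => // x [Ax Bx]; rewrite -ABN0.
  by split; apply: (trunc_le (_ : N <= n)%N) => //; near: n; exact: nbhs_infty_ge.
have [x ABx] : exists x, forall n, (trunc A n `&` trunc B n) x.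
  apply: bigcap_nested_neq0 => [n|m n le_mn y []|n y z [Ay By] yz].
  - by apply/set0P/eqP => AB0n; apply: NAB0; exists n.
  - by split; apply: (trunc_le le_mn).
  - by split; apply: (trunc_agree _ yz).
have : (A `&` B) x by split; [apply: lowA | apply: lowB] => n; case: (ABx n).
by rewrite AB0.
Unshelve. all: by end_near.
Qed.

Lemma big_setU_disjoint (T : Type) (idx : T) (op : Monoid.com_law idx) (I : finType)
    (A B : {set I}) (F : I -> T) : [disjoint A & B]%B ->
  \big[op/idx]_(i in A :|: B) F i = op (\big[op/idx]_(i in A) F i) (\big[op/idx]_(i in B) F i).
Proof. by move=> AB; rewrite -bigU //; apply: eq_bigl => i; rewrite inE. Qed.

Section GradeTwo.
Variables (R : realType) (n : nat).

Definition Dn_set (X Y : {set npath n}) : R[i] := \sum_(w in X) \sum_(w' in Y) Dn R w w'.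

Lemma mu_n_Dn_set (X : {set npath n}) : mu_n R X = Dn_set X X.
Proof. by []. Qed.

Lemma Dn_setUl (X Y Z : {set npath n}) : [disjoint X & Y]%B ->
  Dn_set (X :|: Y) Z = Dn_set X Z + Dn_set Y Z.
Proof. by move=> XY; rewrite /Dn_set big_setU_disjoint. Qed.

Lemma Dn_setUr (X Y Z : {set npath n}) : [disjoint X & Y]%B ->
  Dn_set Z (X :|: Y) = Dn_set Z X + Dn_set Z Y.
Proof.
by move=> XY; rewrite /Dn_set -big_split; apply: eq_bigr => w _; rewrite big_setU_disjoint.
Qed.

Lemma mu_n_setU3 (X Y Z : {set npath n}) :
  [disjoint X & Y]%B -> [disjoint X & Z]%B -> [disjoint Y & Z]%B ->
  mu_n R (X :|: Y :|: Z) = mu_n R (X :|: Y) + mu_n R (X :|: Z) + mu_n R (Y :|: Z)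
    - mu_n R X - mu_n R Y - mu_n R Z.
Proof.
move=> XY XZ YZ; have XYZ : [disjoint X :|: Y & Z]%B.
  by rewrite finset.disjoints_subset finset.subUset -!finset.disjoints_subset XZ YZ.
rewrite !mu_n_Dn_set !(Dn_setUl, Dn_setUr) //; ring.
Qed.

End GradeTwo.

Lemma cyl_setU n (X Y : {set npath n}) : cyl (X :|: Y) = cyl X `|` cyl Y.
Proof. by apply/seteqP; split=> x; rewrite /cyl /= inE => /orP. Qed.

Lemma trunc_paths_disjoint (A B : set Omega) n :
  trunc A n `&` trunc B n = set0 -> [disjoint trunc_paths A n & trunc_paths B n]%B.
Proof.
move=> AB0; apply/pred0P => w /=; apply/negP => /andP [wA wB].
have [x xw] := Omega_n_prefix (fintype.subsetP (trunc_paths_sub A n) w wA).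
have : (trunc A n `&` trunc B n) x by rewrite !trunc_cylE /cyl /= xw.
by rewrite AB0.
Qed.

Lemma mu_trunc_setU3 (R : realType) (A B C : set Omega) n :
  trunc A n `&` trunc B n = set0 -> trunc A n `&` trunc C n = set0 ->
  trunc B n `&` trunc C n = set0 ->
  mu R (trunc (A `|` B `|` C) n) =
  mu R (trunc (A `|` B) n) + mu R (trunc (A `|` C) n) + mu R (trunc (B `|` C) n)
  - mu R (trunc A n) - mu R (trunc B n) - mu R (trunc C n).
Proof.
move=> /trunc_paths_disjoint AB /trunc_paths_disjoint AC /trunc_paths_disjoint BC.
rewrite !truncU !trunc_cylE -!cyl_setU !mu_cyl ?finset.subUset ?trunc_paths_sub //.
by rewrite mu_n_setU3 // !raddfB !raddfD.
Qed.

Lemma mu_trunc_cyl_cvg (R : realType) n (B : {set npath n}) :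
  mu R (trunc (cyl B) k) @[k --> \oo] --> mu R (cyl B).
Proof.
apply: cvg_near_cst; apply: filterS (nbhs_infty_ge n) => k le_nk.
by rewrite trunc_cyl.
Qed.

Lemma cyl_beneficial_lower (R : realType) n (B : {set npath n}) :
  (beneficial R (cyl B) /\ lower (cyl B)) /\ mu_hat R (cyl B) = mu R (cyl B).
Proof.
split; first by split; [exact: cvgP _ (@mu_trunc_cyl_cvg R _ B) | exact: cyl_lower].
by apply: cvg_lim; [exact: Rhausdorff | exact: mu_trunc_cyl_cvg].
Qed.

Lemma mu_trunc_setU3_cvg (R : realType) (A B C : set Omega) :
  lower A -> lower B -> lower C ->
  A `&` B = set0 -> A `&` C = set0 -> B `&` C = set0 ->
  beneficial R A -> beneficial R B -> beneficial R C ->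
  beneficial R (A `|` B) -> beneficial R (A `|` C) -> beneficial R (B `|` C) ->
  mu R (trunc (A `|` B `|` C) n) @[n --> \oo] -->
    mu_hat R (A `|` B) + mu_hat R (A `|` C) + mu_hat R (B `|` C)
    - mu_hat R A - mu_hat R B - mu_hat R C.
Proof.
move=> lowA lowB lowC AB0 AC0 BC0 cvA cvB cvC cvAB cvAC cvBC.
apply: cvg_trans _ (cvgB (cvgB (cvgB (cvgD (cvgD cvAB cvAC) cvBC) cvA) cvB) cvC).
apply: near_eq_cvg; near=> n.
rewrite /= mu_trunc_setU3 //; near: n; exact: lower_trunc_disjoint.
Unshelve. all: by end_near.
Qed.

Lemma set0_cyl : set0 = cyl (finset.set0 : {set npath 0}).
Proof. by apply/seteqP; split=> x //; rewrite /cyl /= inE. Qed.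

Lemma setT_cyl : setT = cyl (Omega_n 0).
Proof. by apply/seteqP; split=> x //= _; exact: prefix_in_Omega_n. Qed.

Theorem theorem4p1 (R : realType) :
  quadratic_algebra lower /\
  quadratic_algebra (fun A : set Omega => beneficial R A /\ lower A) /\
  q_measure (fun A : set Omega => beneficial R A /\ lower A) (mu_hat R) /\
  (forall A : set Omega, is_cyl A ->
     (beneficial R A /\ lower A) /\ mu_hat R A = mu R A).
Proof.
have [set0_ok _] := cyl_beneficial_lower R (finset.set0 : {set npath 0}).
have [setT_ok _] := cyl_beneficial_lower R (Omega_n 0).
rewrite -set0_cyl in set0_ok; rewrite -setT_cyl in setT_ok.
split; [|split; [|split]].
- split; [exact: set0_ok.2 | split; [exact: setT_ok.2|]].
  by move=> A B C lowA lowB lowC *; exact: lowerU (lowerU lowA lowB) lowC.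
- split; [exact: set0_ok | split; [exact: setT_ok|]].
  move=> A B C [cvA lowA] [cvB lowB] [cvC lowC] AB0 AC0 BC0 [cvAB _] [cvAC _] [cvBC _].
  split; last exact: lowerU (lowerU lowA lowB) lowC.
  exact: cvgP _ (mu_trunc_setU3_cvg lowA lowB lowC AB0 AC0 BC0 cvA cvB cvC cvAB cvAC cvBC).
- split=> [A [cvA _]|A B C [cvA lowA] [cvB lowB] [cvC lowC] AB0 AC0 BC0 [cvAB _] [cvAC _] [cvBC _]].
    by apply: limr_ge => //; apply: nearW => n; exact: mu_ge0.
  apply: cvg_lim; first exact: Rhausdorff.
  exact: (mu_trunc_setU3_cvg lowA lowB lowC AB0 AC0 BC0 cvA cvB cvC cvAB cvAC cvBC).
- by move=> A [n [B [_ ->]]]; exact: cyl_beneficial_lower.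
Qed.
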